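(* Let $\kappa=(\xi,\eta)\in S\mathbb{H}$ and $\nu=(\alpha,\beta)\in\mathbb{H}^2$. Then $\{\kappa,\nu\}=0$ if and only if $\nu=\kappa x$ for some $x\in\mathbb{H}$.
   Context: For $q=a+bi+cj+dk\in\mathbb{H}$, $q^*=a+bi+cj-dk$, $\bar q=a-bi-cj-dk$. $\mathcal{V}=\mathrm{span}_\mathbb{R}\{1,i,j\}$. $S\mathbb{H}=\{(\xi,\eta)\in\mathbb{H}^2\setminus\{(0,0)\}:\xi\bar\eta\in\mathcal{V}\}$. The bracket of $\kappa_m=(\xi_m,\eta_m)\in\mathbb{H}^2$ is $\{\kappa_1,\kappa_2\}=\xi_1^*\eta_2-\eta_1^*\xi_2$. Right multiplication: $(\xi,\eta)x=(\xi x,\eta x)$. *)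

From mathcomp Require Import all_boot all_order all_algebra.
From mathcomp Require Import reals.
Set Implicit Arguments. Unset Strict Implicit. Unset Printing Implicit Defensive.
Import Order.TTheory GRing.Theory Num.Theory.
Local Open Scope ring_scope.

(* q = q0 + q1 i + q2 j + q3 k *)
Record quat (R : realType) := Quat { q0 : R; q1 : R; q2 : R; q3 : R }.

Section Quat.
Variable R : realType.
Implicit Types p q : quat R.

Definition qzero : quat R := Quat 0 0 0 0.
Definition qadd p q := Quat (q0 p + q0 q) (q1 p + q1 q) (q2 p + q2 q) (q3 p + q3 q).
Definition qsub p q := Quat (q0 p - q0 q) (q1 p - q1 q) (q2 p - q2 q) (q3 p - q3 q).
(* Hamilton product, i^2 = j^2 = k^2 = ijk = -1 *)
Definition qmul p q := Quat
  (q0 p * q0 q - q1 p * q1 q - q2 p * q2 q - q3 p * q3 q)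
  (q0 p * q1 q + q1 p * q0 q + q2 p * q3 q - q3 p * q2 q)
  (q0 p * q2 q - q1 p * q3 q + q2 p * q0 q + q3 p * q1 q)
  (q0 p * q3 q + q1 p * q2 q - q2 p * q1 q + q3 p * q0 q).
Definition qconj q := Quat (q0 q) (- q1 q) (- q2 q) (- q3 q).
Definition qstar q := Quat (q0 q) (q1 q) (q2 q) (- q3 q).

Definition inV q : Prop := q3 q = 0.

Definition inSH (k : quat R * quat R) : Prop :=
  k <> (qzero, qzero) /\ inV (qmul k.1 (qconj k.2)).

Definition qbracket (k1 k2 : quat R * quat R) : quat R :=
  qsub (qmul (qstar k1.1) k2.2) (qmul (qstar k1.2) k2.1).

Definition qrmul (k : quat R * quat R) (x : quat R) : quat R * quat R :=
  (qmul k.1 x, qmul k.2 x).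
End Quat.

From mathcomp Require Import all_boot all_order all_algebra.
From mathcomp Require Import reals.
From mathcomp Require Import ring lra.
Set Implicit Arguments. Unset Strict Implicit. Unset Printing Implicit Defensive.
Import Order.TTheory GRing.Theory Num.Theory.
Local Open Scope ring_scope.

(* Write h for the k-component of xi \bar eta, so that kappa is in SH iff h = 0.
   Two polynomial identities drive the proof: {kappa, kappa x} = -2 h k x, and
   eta \bar xi alpha = |xi|^2 beta - \bar{xi^*} {kappa, nu} - 2 h k alpha.
   For h = 0 the first gives "if"; the second shows that a null bracket forces
   nu = kappa x with x = xi^{-1} alpha when xi <> 0, and the case xi = 0 reduces
   to it by swapping the two coordinates, which only changes the sign of the
   bracket and of h. *)

Section QuatAlgebra.
Variable R : realType.
Implicit Types (c : R) (q x xi eta al be : quat R).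

Definition qscale c q := Quat (c * q0 q) (c * q1 q) (c * q2 q) (c * q3 q).
Definition qk : quat R := Quat 0 0 0 1.
Definition qnorm2 q := q0 q ^+ 2 + q1 q ^+ 2 + q2 q ^+ 2 + q3 q ^+ 2.

Ltac quat_ring :=
  rewrite /qbracket /qrmul /qscale /qk /qnorm2 /qmul /qsub /qadd /qstar /qconj /=;
  f_equal; ring.

Lemma qmulZr p c q : qmul p (qscale c q) = qscale c (qmul p q).
Proof. by case: p q => [? ? ? ?] [? ? ? ?]; quat_ring. Qed.

Lemma qscaleK c q : c != 0 -> qscale c^-1 (qscale c q) = q.
Proof. by move=> c_nz; case: q => ? ? ? ?; rewrite /qscale /=; f_equal; field. Qed.

Lemma qmul_conjK xi q : qmul xi (qmul (qconj xi) q) = qscale (qnorm2 xi) q.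
Proof. by case: xi q => [? ? ? ?] [? ? ? ?]; quat_ring. Qed.

Lemma qnorm2_eq0 q : qnorm2 q = 0 -> q = qzero R.
Proof.
case: q => a b c d /= norm0; rewrite /qnorm2 /= in norm0.
by have [-> -> -> ->] : [/\ a = 0, b = 0, c = 0 & d = 0] by split; nra.
Qed.

Lemma qbracket_qrmul xi eta x :
  qbracket (xi, eta) (qrmul (xi, eta) x)
  = qscale (-2 * q3 (qmul xi (qconj eta))) (qmul qk x).
Proof. by case: xi eta x => [? ? ? ?] [? ? ? ?] [? ? ? ?]; quat_ring. Qed.

Lemma qmul_conj_qbracket xi eta al be :
  qadd (qmul eta (qmul (qconj xi) al))
       (qadd (qmul (qconj (qstar xi)) (qbracket (xi, eta) (al, be)))
             (qscale (2 * q3 (qmul xi (qconj eta))) (qmul qk al)))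
  = qscale (qnorm2 xi) be.
Proof. by case: xi eta al be => [? ? ? ?] [? ? ? ?] [? ? ? ?] [? ? ? ?]; quat_ring. Qed.

Lemma inV_swap xi eta : inV (qmul xi (qconj eta)) -> inV (qmul eta (qconj xi)).
Proof.
case: xi eta => [? ? ? ?] [? ? ? ?]; by rewrite /inV /qmul /qconj /=; lra.
Qed.

Lemma qbracket_swap_eq0 xi eta al be :
  qbracket (xi, eta) (al, be) = qzero R -> qbracket (eta, xi) (be, al) = qzero R.
Proof.
case: xi eta al be => [? ? ? ?] [? ? ? ?] [? ? ? ?] [? ? ? ?].
by rewrite /qbracket /qmul /qsub /qstar /qzero /= => -[? ? ? ?]; f_equal; lra.
Qed.

Lemma qbracket_eq0_qrmul xi eta al be :
  qnorm2 xi != 0 -> inV (qmul xi (qconj eta)) ->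
  qbracket (xi, eta) (al, be) = qzero R ->
  (al, be) = qrmul (xi, eta) (qscale (qnorm2 xi)^-1 (qmul (qconj xi) al)).
Proof.
move=> xi_nz h0 bracket0.
have eta_al : qmul eta (qmul (qconj xi) al) = qscale (qnorm2 xi) be.
  rewrite -(qmul_conj_qbracket xi eta al be) bracket0 h0.
  by case: xi eta al be {xi_nz h0 bracket0} => [? ? ? ?] [? ? ? ?] [? ? ? ?] [? ? ? ?];
     quat_ring.
by rewrite /qrmul /= !qmulZr qmul_conjK eta_al !qscaleK.
Qed.

End QuatAlgebra.

Theorem lemma3p5 (R : realType) (kappa nu : quat R * quat R) :
  inSH kappa ->
  (qbracket kappa nu = qzero R <-> exists x : quat R, nu = qrmul kappa x).
Proof.
case: kappa nu => xi eta [al be] [kappa_nz h0]; split; last first.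
  by move=> [x ->]; rewrite qbracket_qrmul h0 mulr0 /qscale /= !mul0r.
move=> bracket0; have [/qnorm2_eq0 xi0 | xi_nz] := eqVneq (qnorm2 xi) 0; last first.
  by eexists; exact: qbracket_eq0_qrmul.
have [/qnorm2_eq0 eta0 | eta_nz] := eqVneq (qnorm2 eta) 0.
  by case: kappa_nz; rewrite xi0 eta0.
move: (qbracket_eq0_qrmul eta_nz (inV_swap h0) (qbracket_swap_eq0 bracket0)).
set y := qscale _ _; rewrite /qrmul /= => -[be_y al_y].
by exists y; rewrite al_y be_y.
Qed.
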